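(* Let $b\ge2$ be an integer, $\lambda\in(1/b,1)$, and let $\phi$ be a $\mathbb{Z}$-periodic Lipschitz function such that $W=W^\phi_{\lambda,b}$ is not Lipschitz. Then every $C^2$-regulating period of $W$ is a rational number.
   Context: $W^\phi_{\lambda,b}(x)=\sum_{n\ge0}\lambda^n\phi(b^nx)$. For $k\in\mathbb{Z}_+$, $t\in\mathbb{R}$ is a $C^k$-regulating period of $W$ if $x\mapsto W(x+t)-W(x)$ is a $C^k$ function. *)

From Stdlib Require Import Reals.
From Coquelicot Require Import Coquelicot.
Open Scope R_scope.

Definition W (phi : R -> R) (lambda b : R) (x : R) : R :=
  Series (fun n : nat => lambda ^ n * phi (b ^ n * x)).

Definition Zperiodic (f : R -> R) : Prop := forall x, f (x + 1) = f x.

Definition Lipschitz (f : R -> R) : Prop :=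
  exists L : R, forall x y, Rabs (f x - f y) <= L * Rabs (x - y).

Definition Ck (k : nat) (f : R -> R) : Prop :=
  (forall n x, (n <= k)%nat -> ex_derive_n f n x) /\
  (forall x, continuous (Derive_n f k) x).

Definition regulating_period (k : nat) (g : R -> R) (t : R) : Prop :=
  Ck k (fun x => g (x + t) - g x).

Definition is_rational (t : R) : Prop :=
  exists (p : Z) (q : Z), q <> 0%Z /\ t = IZR p / IZR q.

(* Suppose t is an irrational C^2-regulating period.  Then u = W(. + t) - W is
   1-periodic and C^2, hence u' is A-Lipschitz for some A.  For a Dirichlet
   approximation |q t - p| <= 1/q with gcd(p, q) = 1, the points x + k t
   (k < q) are 1/q-close to the rotated grid x + (k p mod q)/q, which yields
   the Koksma-type estimate |sum_{k<q} u'(x + k t)| <= 2A.  Since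
   W(x + d) - W(x) = sum_{k<q} u(x + k t) for d = q t - p, the difference
   W(. + d) - W is 2A-Lipschitz.  The self-similarity
   W(x) = phi(x) + lambda W(b x) with lambda b > 1 and the boundedness of W
   turn this into |W(x + d) - W(x)| <= C |d|, with C independent of d.  As t
   is irrational these steps d are nonzero and arbitrarily small, so the
   continuity of W makes W C-Lipschitz, contradicting the hypothesis. *)

From Stdlib Require Import Reals Lra Lia ZArith List Permutation Classical.
From Coquelicot Require Import Coquelicot.
Open Scope R_scope.

Lemma lipschitz_constant_nonneg (f : R -> R) (L : R) :
  (forall x y, Rabs (f x - f y) <= L * Rabs (x - y)) -> 0 <= L.
Proof.
  intro HL. specialize (HL 1 0). rewrite Rminus_0_r, Rabs_R1 in HL.
  pose proof (Rabs_pos (f 1 - f 0)). lra.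
Qed.

Lemma lipschitz_of_derive_bound (f df : R -> R) (K : R) :
  (forall x, is_derive f x (df x)) -> (forall x, Rabs (df x) <= K) ->
  forall x y, Rabs (f x - f y) <= K * Rabs (x - y).
Proof.
  intros Hd Hb x y.
  destruct (MVT_gen f y x df) as [c [_ Hc]].
  - intros; apply Hd.
  - intros z _. apply continuity_pt_filterlim.
    exact (ex_derive_continuous f z (ex_intro _ _ (Hd z))).
  - rewrite Hc, Rabs_mult. apply Rmult_le_compat_r; [apply Rabs_pos|apply Hb].
Qed.

Lemma is_derive_shift (u u' : R -> R) (c x : R) :
  (forall y, is_derive u y (u' y)) -> is_derive (fun y => u (y + c)) x (u' (x + c)).
Proof.
  intro Hd.
  assert (Hg : is_derive (fun y : R => y + c) x 1) by (auto_derive; auto; ring).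
  pose proof (is_derive_comp u (fun y => y + c) x (u' (x + c)) 1 (Hd (x + c)) Hg) as H.
  unfold scal in H; simpl in H; unfold mult in H; simpl in H.
  rewrite Rmult_1_l in H. exact H.
Qed.

Lemma periodic_nat (f : R -> R) : Zperiodic f ->
  forall (n : nat) x, f (x + INR n) = f x.
Proof.
  intros Hf n; induction n as [|n IH]; intro x.
  - simpl; rewrite Rplus_0_r; reflexivity.
  - rewrite S_INR. replace (x + (INR n + 1)) with ((x + INR n) + 1) by ring.
    rewrite Hf; apply IH.
Qed.

Lemma periodic_Z (f : R -> R) : Zperiodic f ->
  forall (z : Z) x, f (x + IZR z) = f x.
Proof.
  intros Hf z x. destruct (Z_le_gt_dec 0 z) as [Hz|Hz].
  - rewrite <- (Z2Nat.id z Hz), <- INR_IZR_INZ. apply periodic_nat; auto.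
  - rewrite <- (periodic_nat f Hf (Z.to_nat (- z)) (x + IZR z)).
    rewrite INR_IZR_INZ, Z2Nat.id, opp_IZR by lia. f_equal; ring.
Qed.

Lemma periodic_reduce (f : R -> R) : Zperiodic f ->
  forall y, exists z, 0 <= z <= 1 /\ f y = f z.
Proof.
  intros Hf y. destruct (base_fp y) as [H1 H2].
  exists (frac_part y). split; [lra|].
  rewrite <- (periodic_Z f Hf (Int_part y) (frac_part y)).
  unfold frac_part. f_equal; ring.
Qed.

Lemma Derive_n_periodic (f : R -> R) : Zperiodic f ->
  forall n, Zperiodic (Derive_n f n).
Proof.
  intros Hf n; induction n as [|n IH]; intro x; simpl; [apply Hf|].
  unfold Derive. f_equal. apply Lim_ext. intro h.
  replace (x + 1 + h) with ((x + h) + 1) by ring. rewrite !IH. reflexivity.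
Qed.

Lemma periodic_continuous_bounded (f : R -> R) :
  Zperiodic f -> (forall x, continuous f x) -> exists M, forall x, Rabs (f x) <= M.
Proof.
  intros Hf Hc.
  destruct (continuous_ab_maj_consistent (fun x => Rabs (f x)) 0 1) as [m [Hm _]].
  - lra.
  - intros c _. apply continuous_Rabs_comp, Hc.
  - exists (Rabs (f m)). intro x.
    destruct (periodic_reduce f Hf x) as [z [Hz ->]]. exact (Hm z Hz).
Qed.

Lemma periodic_lipschitz_bounded (f : R -> R) (L : R) : Zperiodic f ->
  (forall x y, Rabs (f x - f y) <= L * Rabs (x - y)) ->
  forall y, Rabs (f y) <= Rabs (f 0) + L.
Proof.
  intros Hf HL y. destruct (periodic_reduce f Hf y) as [z [Hz ->]].
  pose proof (lipschitz_constant_nonneg f L HL).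
  assert (Rabs (z - 0) <= 1) by (rewrite Rminus_0_r, Rabs_right; lra).
  pose proof (HL z 0). pose proof (Rabs_triang_inv (f z) (f 0)). nra.
Qed.

(* The derivative of a 1-periodic C^2 function is Lipschitz: its own
   derivative is continuous and periodic, hence bounded. *)
Lemma periodic_C2_derive_lipschitz (u : R -> R) : Zperiodic u -> Ck 2 u ->
  exists A, forall x y, Rabs (Derive u x - Derive u y) <= A * Rabs (x - y).
Proof.
  intros Hu [Hex Hcont].
  destruct (periodic_continuous_bounded _ (Derive_n_periodic u Hu 2) Hcont) as [A HA].
  exists A. apply (lipschitz_of_derive_bound _ (Derive_n u 2)); [|exact HA].
  intro x. apply Derive_correct. exact (Hex 2%nat x ltac:(lia)).
Qed.

Fixpoint sum_lt (f : nat -> R) (n : nat) : R :=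
  match n with O => 0 | S n => sum_lt f n + f n end.

Lemma sum_lt_ext (f g : nat -> R) n :
  (forall k, (k < n)%nat -> f k = g k) -> sum_lt f n = sum_lt g n.
Proof.
  induction n as [|n IH]; simpl; intro H; [reflexivity|].
  rewrite IH by (intros; apply H; lia). rewrite H by lia. reflexivity.
Qed.

Lemma sum_lt_minus (f g : nat -> R) n :
  sum_lt (fun k => f k - g k) n = sum_lt f n - sum_lt g n.
Proof. induction n as [|n IH]; simpl; [ring|]. rewrite IH; ring. Qed.

Lemma sum_lt_scal (c : R) (f : nat -> R) n :
  sum_lt (fun k => c * f k) n = c * sum_lt f n.
Proof. induction n as [|n IH]; simpl; [ring|]. rewrite IH; ring. Qed.

Lemma sum_lt_const (c : R) n : sum_lt (fun _ => c) n = INR n * c.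
Proof. induction n as [|n IH]; simpl sum_lt; [simpl; ring|]. rewrite IH, S_INR; ring. Qed.

Lemma sum_lt_abs (f g : nat -> R) n :
  (forall k, (k < n)%nat -> Rabs (f k) <= g k) -> Rabs (sum_lt f n) <= sum_lt g n.
Proof.
  induction n as [|n IH]; simpl; intro H.
  - rewrite Rabs_R0; lra.
  - eapply Rle_trans; [apply Rabs_triang|]. apply Rplus_le_compat.
    + apply IH; intros; apply H; lia.
    + apply H; lia.
Qed.

Lemma sum_lt_telescope (f : nat -> R) n :
  sum_lt (fun k => f (S k) - f k) n = f n - f O.
Proof. induction n as [|n IH]; simpl; [ring|]. rewrite IH; ring. Qed.

Lemma is_derive_sum_lt (F dF : nat -> R -> R) n x :
  (forall k, is_derive (F k) x (dF k x)) ->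
  is_derive (fun y => sum_lt (fun k => F k y) n) x (sum_lt (fun k => dF k x) n).
Proof.
  intro H. induction n as [|n IH]; simpl.
  - apply (is_derive_const 0).
  - apply (is_derive_plus (fun y => sum_lt (fun k => F k y) n) (F n)); auto.
Qed.

Lemma sum_lt_as_list (f : nat -> R) n :
  sum_lt f n = fold_right Rplus 0 (map f (seq 0 n)).
Proof.
  assert (Hacc : forall (l : list R) a, fold_right Rplus a l = fold_right Rplus 0 l + a)
    by (induction l; simpl; intros; [ring|]; rewrite IHl; ring).
  induction n as [|n IH]; [reflexivity|].
  rewrite seq_S, map_app, fold_right_app. simpl.
  rewrite IH, (Hacc _ (f n + 0)). ring.
Qed.

Lemma sum_lt_reindex (G : nat -> R) (s : nat -> nat) n :
  (forall k, (k < n)%nat -> (s k < n)%nat) ->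
  (forall k1 k2, (k1 < n)%nat -> (k2 < n)%nat -> s k1 = s k2 -> k1 = k2) ->
  sum_lt (fun k => G (s k)) n = sum_lt G n.
Proof.
  intros Hr Hi. rewrite !sum_lt_as_list.
  replace (map (fun k => G (s k)) (seq 0 n)) with (map G (map s (seq 0 n)))
    by (rewrite map_map; reflexivity).
  assert (Hperm : Permutation (map s (seq 0 n)) (seq 0 n)).
  { apply NoDup_Permutation_bis.
    - apply NoDup_map_NoDup_ForallPairs; [|apply seq_NoDup].
      intros a c Ha Hc. apply in_seq in Ha, Hc. apply Hi; lia.
    - rewrite !length_map; lia.
    - intros y Hy. apply in_map_iff in Hy as [k [<- Hk]]. apply in_seq in Hk.
      apply in_seq. specialize (Hr k). lia. }
  apply (Permutation_map G) in Hperm.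
  induction Hperm; simpl; try congruence; try ring.
Qed.

Lemma progression_telescope (f : R -> R) (x h : R) n :
  sum_lt (fun k => f (x + INR (S k) * h) - f (x + INR k * h)) n = f (x + INR n * h) - f x.
Proof.
  rewrite (sum_lt_telescope (fun k => f (x + INR k * h))). simpl.
  rewrite Rmult_0_l, Rplus_0_r. reflexivity.
Qed.

Lemma multiple_step_bound (f : R -> R) (d c : R) :
  (forall x, Rabs (f (x + d) - f x) <= c) ->
  forall (m : Z) x, Rabs (f (x + IZR m * d) - f x) <= Rabs (IZR m) * c.
Proof.
  intro Hc.
  assert (Hnat : forall (n : nat) x, Rabs (f (x + INR n * d) - f x) <= INR n * c).
  { induction n as [|n IH]; intro x.
    - simpl. rewrite Rmult_0_l, Rplus_0_r, Rminus_diag, Rabs_R0. lra.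
    - rewrite S_INR. replace (x + (INR n + 1) * d) with ((x + INR n * d) + d) by ring.
      replace (f (x + INR n * d + d) - f x) with
        ((f (x + INR n * d + d) - f (x + INR n * d)) + (f (x + INR n * d) - f x)) by ring.
      eapply Rle_trans; [apply Rabs_triang|].
      specialize (Hc (x + INR n * d)). specialize (IH x). lra. }
  intros m x. destruct (Z_le_gt_dec 0 m) as [Hm|Hm].
  - rewrite <- (Z2Nat.id m Hm), <- INR_IZR_INZ.
    rewrite (Rabs_right (INR _)) by (apply Rle_ge, pos_INR). apply Hnat.
  - pose proof (Hnat (Z.to_nat (- m)) (x + IZR m * d)) as G.
    rewrite INR_IZR_INZ, Z2Nat.id, opp_IZR in G by lia.
    replace (x + IZR m * d + - IZR m * d) with x in G by ring.
    rewrite Rabs_minus_sym, (Rabs_left (IZR m)) by (apply IZR_lt; lia). exact G.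
Qed.

Lemma multiple_step_deviation (f : R -> R) (h K : R) (n : nat) :
  (forall x y, Rabs ((f (x + h) - f x) - (f (y + h) - f y)) <= K * Rabs (x - y)) ->
  forall x, Rabs ((f (x + INR n * h) - f x) - INR n * (f (x + h) - f x))
            <= K * INR n ^ 2 * Rabs h.
Proof.
  intros HK x. set (D := fun y => f (y + h) - f y).
  pose proof (lipschitz_constant_nonneg D K HK) as HK0.
  rewrite <- progression_telescope, <- (sum_lt_const (D x)), <- sum_lt_minus.
  eapply Rle_trans.
  - apply (sum_lt_abs _ (fun _ => K * INR n * Rabs h)). intros k Hk.
    replace (x + INR (S k) * h) with ((x + INR k * h) + h) by (rewrite S_INR; ring).
    eapply Rle_trans; [apply (HK (x + INR k * h) x)|].
    replace (x + INR k * h - x) with (INR k * h) by ring.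
    rewrite Rabs_mult, (Rabs_right (INR k)) by (apply Rle_ge, pos_INR).
    assert (INR k <= INR n) by (apply le_INR; lia).
    pose proof (Rabs_pos h).
    rewrite <- Rmult_assoc. apply Rmult_le_compat_r; [lra|]. apply Rmult_le_compat_l; lra.
  - rewrite sum_lt_const. right; ring.
Qed.

Lemma escape_bound (D s : R -> R) (c M rho : R) :
  1 < rho -> (forall x, Rabs (D x) <= M) ->
  (forall x e, c + e <= Rabs (D x) -> c + rho * e <= Rabs (D (s x))) ->
  forall x, Rabs (D x) <= c.
Proof.
  intros Hrho HM Hstep x. apply Rnot_lt_le. intro Hx.
  set (e := Rabs (D x) - c).
  assert (He : 0 < e) by (unfold e; lra).
  assert (Horbit : forall n, exists y, c + rho ^ n * e <= Rabs (D y)).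
  { induction n as [|n [y Hy]].
    - exists x. unfold e. simpl. lra.
    - exists (s y). simpl. rewrite Rmult_assoc. apply Hstep, Hy. }
  destruct (Pow_x_infinity rho ltac:(rewrite Rabs_right; lra) ((M - c) / e + 1)) as [n Hn].
  specialize (Hn n (le_n n)). rewrite Rabs_right in Hn by (apply Rle_ge, pow_le; lra).
  destruct (Horbit n) as [y Hy]. specialize (HM y).
  assert (((M - c) / e + 1) * e <= rho ^ n * e) by (apply Rmult_le_compat_r; lra).
  assert (((M - c) / e + 1) * e = M - c + e) by (field; lra).
  lra.
Qed.

Lemma lipschitz_of_small_steps (f : R -> R) (C : R) :
  (forall x eps, 0 < eps -> exists eta, 0 < eta /\
     forall r, Rabs r < eta -> Rabs (f (x + r) - f x) < eps) ->
  (forall e, 0 < e -> exists d, d <> 0 /\ Rabs d < e /\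
     forall x, Rabs (f (x + d) - f x) <= C * Rabs d) ->
  forall x y, Rabs (f x - f y) <= C * Rabs (x - y).
Proof.
  intros Hcont Hsteps x y.
  assert (HC : 0 <= C).
  { destruct (Hsteps 1 Rlt_0_1) as [d [Hd [_ Hb]]]. specialize (Hb 0).
    pose proof (Rabs_pos_lt d Hd). pose proof (Rabs_pos (f (0 + d) - f 0)). nra. }
  apply Rle_plus_epsilon. intros eps Heps.
  set (ep := eps / (C + 2)).
  assert (Hep : 0 < ep) by (unfold ep; apply Rdiv_lt_0_compat; lra).
  assert (Hep2 : (C + 1) * ep <= eps).
  { unfold ep. apply (Rmult_le_reg_r (C + 2)); [lra|]. field_simplify; nra. }
  destruct (Hcont x ep Hep) as [eta [Heta Hx]].
  destruct (Hsteps (Rmin eta ep) ltac:(apply Rmin_glb_lt; lra)) as [d [Hd0 [Hdm Hd]]].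
  pose proof (Rmin_l eta ep). pose proof (Rmin_r eta ep).
  pose proof (Rabs_pos_lt d Hd0).
  (* write x = y + m d + r with m = floor((x - y) / d) and |r| < |d| *)
  set (m := Int_part ((x - y) / d)).
  destruct (base_Int_part ((x - y) / d)) as [Hm1 Hm2]. fold m in Hm1, Hm2.
  set (r := x - y - IZR m * d).
  assert (Hr : Rabs r < Rabs d).
  { replace r with (d * ((x - y) / d - IZR m)) by (unfold r; field; auto).
    rewrite Rabs_mult, (Rabs_right ((x - y) / d - IZR m)) by lra. nra. }
  assert (Hmd : Rabs (IZR m) * Rabs d <= Rabs (x - y) + Rabs d).
  { rewrite <- Rabs_mult. replace (IZR m * d) with ((x - y) - r) by (unfold r; ring).
    eapply Rle_trans; [apply Rabs_triang|]. rewrite Rabs_Ropp. lra. }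
  replace (f x - f y) with ((f x - f (x + - r)) + (f (y + IZR m * d) - f y))
    by (replace (x + - r) with (y + IZR m * d) by (unfold r; ring); ring).
  eapply Rle_trans; [apply Rabs_triang|].
  assert (Q1 : Rabs (f x - f (x + - r)) < ep).
  { rewrite Rabs_minus_sym. apply Hx. rewrite Rabs_Ropp. lra. }
  pose proof (multiple_step_bound f d (C * Rabs d) Hd m y) as Q2.
  assert (Q3 : Rabs (IZR m) * (C * Rabs d) <= C * (Rabs (x - y) + ep)).
  { replace (Rabs (IZR m) * (C * Rabs d)) with (C * (Rabs (IZR m) * Rabs d)) by ring.
    apply Rmult_le_compat_l; lra. }
  nra.
Qed.

Lemma pigeonhole (N : nat) (f : nat -> nat) : (forall k, (k <= N)%nat -> (f k < N)%nat) ->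
  exists i j, (i < j <= N)%nat /\ f i = f j.
Proof.
  intro Hf. apply NNPP; intro Hn.
  assert (HD : NoDup (map f (seq 0 (S N)))).
  { apply NoDup_map_NoDup_ForallPairs; [|apply seq_NoDup].
    intros a c Ha Hc Hac. apply in_seq in Ha, Hc.
    destruct (Nat.lt_trichotomy a c) as [H|[H|H]]; auto; exfalso; apply Hn.
    - exists a, c; split; [lia|auto].
    - exists c, a; split; [lia|auto]. }
  assert (HI : incl (map f (seq 0 (S N))) (seq 0 N)).
  { intros y Hy. apply in_map_iff in Hy as [k [<- Hk]]. apply in_seq in Hk.
    apply in_seq. specialize (Hf k). lia. }
  pose proof (NoDup_incl_length HD HI) as HL. rewrite length_map, !length_seq in HL. lia.
Qed.

Definition frac_box (N : nat) (y : R) : nat := Z.to_nat (Int_part (INR N * frac_part y)).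

Lemma frac_box_spec (N : nat) (y : R) :
  (1 <= N)%nat -> (frac_box N y < N)%nat /\
  IZR (Z.of_nat (frac_box N y)) <= INR N * frac_part y < IZR (Z.of_nat (frac_box N y)) + 1.
Proof.
  intro HN. pose proof (base_fp y) as [Hf0 Hf1].
  assert (HNpos : 0 < INR N) by (apply lt_0_INR; lia).
  set (v := INR N * frac_part y).
  assert (Hv : 0 <= v < INR N) by (unfold v; nra).
  destruct (base_Int_part v) as [H1 H2].
  assert (Hpos : (0 <= Int_part v)%Z) by (apply le_IZR; apply Rnot_lt_le; intro Hc;
    apply lt_IZR in Hc; assert (Hm : (Int_part v <= -1)%Z) by lia; apply IZR_le in Hm; lra).
  unfold frac_box. fold v. rewrite Z2Nat.id by exact Hpos.
  split; [|lra].
  apply INR_lt. rewrite INR_IZR_INZ, Z2Nat.id by exact Hpos. lra.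
Qed.

Lemma dirichlet_approximation (t : R) (N : nat) : (1 <= N)%nat ->
  exists q p : Z, (1 <= q <= Z.of_nat N)%Z /\ Rabs (IZR q * t - IZR p) < / INR N.
Proof.
  intro HN. assert (HNpos : 0 < INR N) by (apply lt_0_INR; lia).
  destruct (pigeonhole N (fun k => frac_box N (INR k * t))) as [i [j [Hij Heq]]].
  { intros k _. apply frac_box_spec, HN. }
  exists (Z.of_nat j - Z.of_nat i)%Z, (Int_part (INR j * t) - Int_part (INR i * t))%Z.
  split; [lia|].
  destruct (frac_box_spec N (INR i * t) HN) as [_ Hi].
  destruct (frac_box_spec N (INR j * t) HN) as [_ Hj]. rewrite Heq in Hi.
  rewrite !minus_IZR, <- !INR_IZR_INZ.
  replace ((INR j - INR i) * t - (IZR (Int_part (INR j * t)) - IZR (Int_part (INR i * t))))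
    with (frac_part (INR j * t) - frac_part (INR i * t)) by (unfold frac_part; ring).
  apply (Rmult_lt_reg_l (INR N)); [lra|]. rewrite Rinv_r by lra.
  rewrite <- (Rabs_right (INR N)) at 1 by lra. rewrite <- Rabs_mult.
  apply Rabs_def1; lra.
Qed.

Lemma dirichlet_coprime (t : R) (N : nat) : (1 <= N)%nat ->
  exists q p : Z, (1 <= q <= Z.of_nat N)%Z /\ Z.gcd p q = 1%Z /\
    Rabs (IZR q * t - IZR p) < / INR N.
Proof.
  intro HN. destruct (dirichlet_approximation t N HN) as [q [p [Hq Hd]]].
  set (g := Z.gcd p q).
  assert (Hg0 : (0 < g)%Z).
  { pose proof (Z.gcd_nonneg p q).
    assert (g <> 0%Z) by (intro Hc; apply Z.gcd_eq_0_r in Hc; lia). unfold g in *; lia. }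
  assert (Ep : p = (g * (p / g))%Z)
    by (apply Znumtheory.Zdivide_Zdiv_eq; [lia|apply Z.gcd_divide_l]).
  assert (Eq : q = (g * (q / g))%Z)
    by (apply Znumtheory.Zdivide_Zdiv_eq; [lia|apply Z.gcd_divide_r]).
  exists (q / g)%Z, (p / g)%Z. split; [|split].
  - split; [|apply Z.div_le_upper_bound; nia].
    destruct (Z_le_gt_dec 1 (q / g)); auto. nia.
  - apply Z.gcd_div_gcd; [lia|reflexivity].
  - eapply Rle_lt_trans; [|exact Hd]. rewrite Ep, Eq at 2. rewrite !mult_IZR.
    replace (IZR g * IZR (q / g) * t - IZR g * IZR (p / g)) with
      (IZR g * (IZR (q / g) * t - IZR (p / g))) by ring.
    rewrite Rabs_mult. assert (1 <= IZR g) by (apply IZR_le; lia).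
    rewrite (Rabs_right (IZR g)) by lra.
    pose proof (Rabs_pos (IZR (q / g) * t - IZR (p / g))). nra.
Qed.

Lemma rational_of_integer_relation (t : R) (q p : Z) :
  q <> 0%Z -> IZR q * t - IZR p = 0 -> is_rational t.
Proof.
  intros Hq E. exists p, q. split; [exact Hq|].
  assert (IZR q <> 0) by (apply not_0_IZR; exact Hq).
  apply (Rmult_eq_reg_l (IZR q)); [|auto]. field_simplify; lra.
Qed.

Lemma rotation_injective (p q : Z) (k1 k2 : nat) :
  (1 <= q)%Z -> Z.gcd p q = 1%Z -> (Z.of_nat k1 < q)%Z -> (Z.of_nat k2 < q)%Z ->
  ((Z.of_nat k1 * p) mod q = (Z.of_nat k2 * p) mod q)%Z -> k1 = k2.
Proof.
  intros Hq Hg H1 H2 E.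
  pose proof (Z.div_mod (Z.of_nat k1 * p) q ltac:(lia)).
  pose proof (Z.div_mod (Z.of_nat k2 * p) q ltac:(lia)).
  assert (Hdv : (q | p * (Z.of_nat k1 - Z.of_nat k2))%Z).
  { exists ((Z.of_nat k1 * p) / q - (Z.of_nat k2 * p) / q)%Z. lia. }
  apply Z.gauss in Hdv; [|rewrite Z.gcd_comm; exact Hg].
  destruct Hdv as [c Hc].
  destruct (Z.lt_trichotomy c 0) as [Hc0|[Hc0|Hc0]]; [nia| |nia]. subst c. lia.
Qed.

(* The increments of a 1-periodic function over the grid (1/q) Z, visited in
   the rotated order k p mod q (k < q), still sum to u(x + 1) - u(x) = 0. *)
Lemma rotated_grid_increments (u : R -> R) (p q : Z) (x : R) :
  Zperiodic u -> (1 <= q)%Z -> Z.gcd p q = 1%Z ->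
  sum_lt (fun k => u (x + (IZR (Z.of_nat k * p) + 1) / IZR q)
                   - u (x + IZR (Z.of_nat k * p) / IZR q)) (Z.to_nat q) = 0.
Proof.
  intros Hu Hq Hg. set (Q := IZR q).
  assert (HQ : 0 < Q) by (apply IZR_lt; lia).
  set (G := fun j : nat => u (x + INR (S j) * / Q) - u (x + INR j * / Q)).
  set (r := fun k : nat => Z.to_nat ((Z.of_nat k * p) mod q)).
  rewrite (sum_lt_ext _ (fun k => G (r k))).
  - rewrite sum_lt_reindex.
    + unfold G. rewrite progression_telescope, INR_IZR_INZ, Z2Nat.id by lia.
      fold Q. rewrite Rinv_r, Hu by lra. ring.
    + intros k _. unfold r. pose proof (Z.mod_pos_bound (Z.of_nat k * p) q ltac:(lia)). lia.
    + intros k1 k2 H1 H2 E. unfold r in E.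
      pose proof (Z.mod_pos_bound (Z.of_nat k1 * p) q ltac:(lia)).
      pose proof (Z.mod_pos_bound (Z.of_nat k2 * p) q ltac:(lia)).
      apply (f_equal Z.of_nat) in E. rewrite !Z2Nat.id in E by lia.
      apply (rotation_injective p q); lia.
  - (* shifting k p to its residue k p mod q moves both points by an integer *)
    intros k _. unfold G, r.
    pose proof (Z.mod_pos_bound (Z.of_nat k * p) q ltac:(lia)).
    pose proof (Z.div_mod (Z.of_nat k * p) q ltac:(lia)) as Ed.
    set (m := ((Z.of_nat k * p) mod q)%Z) in *.
    set (d := ((Z.of_nat k * p) / q)%Z) in *.
    rewrite S_INR, INR_IZR_INZ, Z2Nat.id by lia.
    rewrite Ed, plus_IZR, mult_IZR. fold Q.
    rewrite <- (periodic_Z u Hu d (x + (IZR m + 1) * / Q)).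
    rewrite <- (periodic_Z u Hu d (x + IZR m * / Q)).
    f_equal; f_equal; field; lra.
Qed.

Lemma difference_quotient_close (u u' : R -> R) (A Q a y : R) :
  (forall x, is_derive u x (u' x)) ->
  (forall x z, Rabs (u' x - u' z) <= A * Rabs (x - z)) -> 0 < Q ->
  Rabs (u' y - Q * (u (a + / Q) - u a)) <= A * (Rabs (y - a) + / Q).
Proof.
  intros Hd HL HQ. pose proof (lipschitz_constant_nonneg u' A HL) as HA.
  assert (Hinv : 0 < / Q) by (apply Rinv_0_lt_compat; lra).
  destruct (MVT_gen u a (a + / Q) u') as [c [Hc Hmvt]].
  - intros; apply Hd.
  - intros z _. apply continuity_pt_filterlim.
    exact (ex_derive_continuous u z (ex_intro _ _ (Hd z))).
  - rewrite Rmin_left, Rmax_right in Hc by lra.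
    rewrite Hmvt. replace (Q * (u' c * (a + / Q - a))) with (u' c) by (field; lra).
    eapply Rle_trans; [apply HL|]. apply Rmult_le_compat_l; [exact HA|].
    replace (y - c) with ((y - a) + (a - c)) by ring.
    eapply Rle_trans; [apply Rabs_triang|].
    assert (Rabs (a - c) <= / Q) by (apply Rabs_le; lra). lra.
Qed.

Lemma koksma_bound (u u' : R -> R) (A t : R) (q p : Z) :
  Zperiodic u -> (forall x, is_derive u x (u' x)) ->
  (forall x y, Rabs (u' x - u' y) <= A * Rabs (x - y)) ->
  (1 <= q)%Z -> Z.gcd p q = 1%Z -> Rabs (IZR q * t - IZR p) <= / IZR q ->
  forall x, Rabs (sum_lt (fun k => u' (x + INR k * t)) (Z.to_nat q)) <= 2 * A.
Proof.
  intros Hu Hd HL Hq Hg Hqt x.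
  set (n := Z.to_nat q). set (Q := IZR q) in *.
  assert (EQ : Q = INR n) by (unfold Q, n; rewrite INR_IZR_INZ, Z2Nat.id by lia; reflexivity).
  assert (HQ : 1 <= Q) by (unfold Q; apply IZR_le; lia).
  set (a := fun k : nat => x + IZR (Z.of_nat k * p) / Q).
  set (G := fun k : nat => u (a k + / Q) - u (a k)).
  assert (Hsum : sum_lt G n = 0).
  { rewrite <- (rotated_grid_increments u p q x Hu Hq Hg). apply sum_lt_ext.
    intros k _. unfold G, a, Q. f_equal. f_equal. field. unfold Q in HQ. lra. }
  (* the sample point x + k t lies within 1/q of the rotated grid point a k *)
  assert (Hclose : forall k, (k < n)%nat -> Rabs (x + INR k * t - a k) <= / Q).
  { intros k Hk. unfold a.
    replace (x + INR k * t - (x + IZR (Z.of_nat k * p) / Q)) with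
      (INR k / Q * (Q * t - IZR p)) by (rewrite mult_IZR, <- INR_IZR_INZ; field; lra).
    assert (0 <= INR k / Q <= 1).
    { split; [apply Rmult_le_pos; [apply pos_INR|left; apply Rinv_0_lt_compat; lra]|].
      apply Rmult_le_reg_r with Q; [lra|]. field_simplify; [|lra].
      rewrite EQ. apply le_INR. lia. }
    rewrite Rabs_mult, (Rabs_right (INR k / Q)) by lra.
    pose proof (Rabs_pos (Q * t - IZR p)). nra. }
  replace (sum_lt (fun k => u' (x + INR k * t)) n) with
    (sum_lt (fun k => u' (x + INR k * t) - Q * G k) n + Q * sum_lt G n)
    by (rewrite sum_lt_minus, <- (sum_lt_scal Q G); ring).
  rewrite Hsum, Rmult_0_r, Rplus_0_r.
  eapply Rle_trans.
  - apply (sum_lt_abs _ (fun _ => 2 * A / Q)). intros k Hk.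
    pose proof (lipschitz_constant_nonneg u' A HL).
    eapply Rle_trans; [apply (difference_quotient_close u u' A Q (a k)); auto; lra|].
    specialize (Hclose k Hk). unfold Rdiv. nra.
  - rewrite sum_lt_const, <- EQ. right; field; lra.
Qed.

(* If u = g(. + t) - g has an A-Lipschitz derivative, g is 1-periodic and
   p / q is a Dirichlet approximation of t, then the difference of g with the
   small step d = q t - p is 2A-Lipschitz: it equals sum_{k<q} u(. + k t). *)
Lemma approximate_period_difference_lipschitz (g u' : R -> R) (A t : R) (q p : Z) :
  Zperiodic g ->
  (forall x, is_derive (fun y => g (y + t) - g y) x (u' x)) ->
  (forall x y, Rabs (u' x - u' y) <= A * Rabs (x - y)) ->
  (1 <= q)%Z -> Z.gcd p q = 1%Z -> Rabs (IZR q * t - IZR p) <= / IZR q ->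
  let d := IZR q * t - IZR p in
  forall x y, Rabs ((g (x + d) - g x) - (g (y + d) - g y)) <= 2 * A * Rabs (x - y).
Proof.
  intros Hg Hd HL Hq Hgcd Hqt d.
  set (u := fun y => g (y + t) - g y) in Hd.
  assert (Hu : Zperiodic u).
  { intro x. unfold u. replace (x + 1 + t) with ((x + t) + 1) by ring. rewrite !Hg. reflexivity. }
  set (n := Z.to_nat q).
  set (F := fun z => sum_lt (fun k => u (z + INR k * t)) n).
  assert (HF : forall z, g (z + d) - g z = F z).
  { intro z. unfold d, F.
    replace (z + (IZR q * t - IZR p)) with ((z + INR n * t) + IZR (- p))
      by (unfold n; rewrite opp_IZR, INR_IZR_INZ, Z2Nat.id by lia; ring).
    rewrite (periodic_Z g Hg), <- progression_telescope.
    apply sum_lt_ext. intros k _. unfold u. rewrite S_INR.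
    replace (z + (INR k + 1) * t) with (z + INR k * t + t) by ring. reflexivity. }
  assert (HFd : forall z, is_derive F z (sum_lt (fun k => u' (z + INR k * t)) n)).
  { intro z.
    apply (is_derive_sum_lt (fun k y => u (y + INR k * t)) (fun k y => u' (y + INR k * t))).
    intro k. apply is_derive_shift. exact Hd. }
  intros x y. rewrite !HF.
  apply (lipschitz_of_derive_bound F _ (2 * A) HFd).
  exact (koksma_bound u u' A t q p Hu Hd HL Hq Hgcd Hqt).
Qed.

Section Weierstrass.

Variables (b : nat) (lambda : R) (phi : R -> R) (L : R).
Hypothesis Hb : (2 <= b)%nat.
Hypothesis Hlam : / INR b < lambda < 1.
Hypothesis Hper : Zperiodic phi.
Hypothesis HL : forall x y, Rabs (phi x - phi y) <= L * Rabs (x - y).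

Let B := INR b.
Let Wf := W phi lambda B.

Lemma base_ge2 : 2 <= B.
Proof. unfold B. replace 2 with (INR 2) by (simpl; ring). apply le_INR; lia. Qed.

Lemma lambda_pos : 0 < lambda.
Proof.
  pose proof base_ge2. assert (0 < / B) by (apply Rinv_0_lt_compat; lra).
  unfold B in *; lra.
Qed.

Lemma lambda_base_gt1 : 1 < lambda * B.
Proof.
  pose proof base_ge2. destruct Hlam as [H1 _]. fold B in H1.
  apply (Rmult_lt_compat_r B) in H1; [|lra]. rewrite Rinv_l in H1 by lra. exact H1.
Qed.

Lemma abs_lambda_lt1 : Rabs lambda < 1.
Proof. pose proof lambda_pos. rewrite Rabs_right by lra. lra. Qed.

Lemma W_term_bound (n : nat) (y : R) :
  Rabs (lambda ^ n * phi y) <= (Rabs (phi 0) + L) * lambda ^ n.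
Proof.
  pose proof lambda_pos.
  rewrite Rabs_mult, Rmult_comm, (Rabs_right (lambda ^ n)) by (apply Rle_ge, pow_le; lra).
  apply Rmult_le_compat_r; [apply pow_le; lra|].
  exact (periodic_lipschitz_bounded phi L Hper HL y).
Qed.

Lemma W_geometric_series :
  is_series (fun n => (Rabs (phi 0) + L) * lambda ^ n) ((Rabs (phi 0) + L) * / (1 - lambda)).
Proof. apply (is_series_scal_l _ (fun n => lambda ^ n)), is_series_geom, abs_lambda_lt1. Qed.

Lemma W_series_abs (x : R) : ex_series (fun n => Rabs (lambda ^ n * phi (B ^ n * x))).
Proof.
  apply (ex_series_le (V := R_CompleteNormedModule)) with
    (fun n => (Rabs (phi 0) + L) * lambda ^ n).
  - intro n. change (norm (Rabs (lambda ^ n * phi (B ^ n * x))))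
      with (Rabs (Rabs (lambda ^ n * phi (B ^ n * x)))).
    rewrite Rabs_Rabsolu. apply W_term_bound.
  - eexists. apply W_geometric_series.
Qed.

Lemma W_bounded : exists M, forall x, Rabs (Wf x) <= M.
Proof.
  exists ((Rabs (phi 0) + L) * / (1 - lambda)). intro x.
  unfold Wf, W. eapply Rle_trans; [apply Series_Rabs, W_series_abs|].
  rewrite <- (is_series_unique _ _ W_geometric_series).
  apply Series_le.
  - intro n. split; [apply Rabs_pos|apply W_term_bound].
  - eexists; exact W_geometric_series.
Qed.

Lemma W_periodic : Zperiodic Wf.
Proof.
  intro x. unfold Wf, W. apply Series_ext. intro n. f_equal.
  replace (B ^ n * (x + 1)) with (B ^ n * x + INR (b ^ n)) by (rewrite pow_INR; unfold B; ring).
  apply periodic_nat, Hper.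
Qed.

Lemma W_functional_equation (x : R) : Wf x = phi x + lambda * Wf (B * x).
Proof.
  unfold Wf, W. rewrite Series_incr_1 by apply ex_series_Rabs, W_series_abs. simpl.
  rewrite !Rmult_1_l. f_equal.
  rewrite <- Series_scal_l. apply Series_ext. intro n.
  rewrite Rmult_assoc. do 3 f_equal. ring.
Qed.

Lemma W_iterate (N : nat) (x : R) :
  Wf x = sum_lt (fun n => lambda ^ n * phi (B ^ n * x)) N + lambda ^ N * Wf (B ^ N * x).
Proof.
  induction N as [|N IH]; simpl.
  - rewrite !Rmult_1_l. ring.
  - rewrite IH, (W_functional_equation (B ^ N * x)).
    replace (B * B ^ N * x) with (B * (B ^ N * x)) by ring. ring.
Qed.

Lemma W_difference_truncation (M : R) (N : nat) (x r : R) :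
  (forall y, Rabs (Wf y) <= M) ->
  Rabs (Wf (x + r) - Wf x)
    <= sum_lt (fun n => lambda ^ n * L * B ^ n) N * Rabs r + lambda ^ N * (2 * M).
Proof.
  intro HM. pose proof lambda_pos. pose proof base_ge2.
  rewrite (W_iterate N (x + r)), (W_iterate N x).
  replace (sum_lt (fun n => lambda ^ n * phi (B ^ n * (x + r))) N
            + lambda ^ N * Wf (B ^ N * (x + r)) -
     (sum_lt (fun n => lambda ^ n * phi (B ^ n * x)) N + lambda ^ N * Wf (B ^ N * x))) with
    (sum_lt (fun n => lambda ^ n * phi (B ^ n * (x + r)) - lambda ^ n * phi (B ^ n * x)) N +
     lambda ^ N * (Wf (B ^ N * (x + r)) - Wf (B ^ N * x))) by (rewrite sum_lt_minus; ring).
  eapply Rle_trans; [apply Rabs_triang|]. apply Rplus_le_compat.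
  - rewrite Rmult_comm, <- sum_lt_scal. apply sum_lt_abs. intros k _.
    rewrite <- Rmult_minus_distr_l, Rabs_mult, (Rabs_right (lambda ^ k))
      by (apply Rle_ge, pow_le; lra).
    eapply Rle_trans; [apply Rmult_le_compat_l; [apply pow_le; lra|apply HL]|].
    replace (B ^ k * (x + r) - B ^ k * x) with (B ^ k * r) by ring.
    rewrite Rabs_mult, (Rabs_right (B ^ k)) by (apply Rle_ge, pow_le; lra). right; ring.
  - rewrite Rabs_mult, (Rabs_right (lambda ^ N)) by (apply Rle_ge, pow_le; lra).
    apply Rmult_le_compat_l; [apply pow_le; lra|].
    eapply Rle_trans; [apply Rabs_triang|]. rewrite Rabs_Ropp.
    pose proof (HM (B ^ N * (x + r))). pose proof (HM (B ^ N * x)). lra.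
Qed.

Lemma W_uniformly_continuous (eps : R) : 0 < eps -> exists eta, 0 < eta /\
  forall x r, Rabs r < eta -> Rabs (Wf (x + r) - Wf x) < eps.
Proof.
  intro He. destruct W_bounded as [M HM]. pose proof lambda_pos.
  assert (HM0 : 0 <= M) by (pose proof (HM 0); pose proof (Rabs_pos (Wf 0)); lra).
  destruct (pow_lt_1_zero lambda abs_lambda_lt1 (eps / (2 * (2 * M + 1))))
    as [N HN]; [apply Rdiv_lt_0_compat; lra|].
  specialize (HN N (le_n N)). rewrite Rabs_right in HN by (apply Rle_ge, pow_le; lra).
  set (S := sum_lt (fun n => lambda ^ n * L * B ^ n) N).
  pose proof (Rle_abs S).
  exists (eps / (2 * (Rabs S + 1))). split; [apply Rdiv_lt_0_compat; pose proof (Rabs_pos S); lra|].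
  intros x r Hr. eapply Rle_lt_trans; [apply (W_difference_truncation M N x r HM)|]. fold S.
  assert (G1 : S * Rabs r <= Rabs S * (eps / (2 * (Rabs S + 1)))).
  { pose proof (Rabs_pos r). pose proof (Rabs_pos S).
    apply Rle_trans with (Rabs S * Rabs r); [nra|]. apply Rmult_le_compat_l; lra. }
  assert (G2 : Rabs S * (eps / (2 * (Rabs S + 1))) < eps / 2).
  { pose proof (Rabs_pos S). apply (Rmult_lt_reg_r (2 * (Rabs S + 1))); [lra|].
    field_simplify; nra. }
  assert (G3 : lambda ^ N * (2 * M) <= eps / (2 * (2 * M + 1)) * (2 * M))
    by (apply Rmult_le_compat_r; lra).
  assert (G4 : eps / (2 * (2 * M + 1)) * (2 * M) < eps / 2).
  { apply (Rmult_lt_reg_r (2 * (2 * M + 1))); [lra|]. field_simplify; nra. }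
  lra.
Qed.

Let scale_const (K : R) : R := (lambda * K * B ^ 2 + L) / (lambda * B - 1).

(* If the step-h difference D_h W is K-Lipschitz and exceeds the level
   scale_const K |h| by e at x, then it exceeds it by lambda b e at x / b:
   by self-similarity lambda (W(x + b h) - W(x)) = D_h W(x / b) - D_h phi(x / b),
   and W(x + b h) - W(x) is close to b D_h W(x). *)
Lemma W_difference_expansion (h K x e : R) :
  (forall x y, Rabs ((Wf (x + h) - Wf x) - (Wf (y + h) - Wf y)) <= K * Rabs (x - y)) ->
  scale_const K * Rabs h + e <= Rabs (Wf (x + h) - Wf x) ->
  scale_const K * Rabs h + lambda * B * e <= Rabs (Wf (x / B + h) - Wf (x / B)).
Proof.
  intros HK He. pose proof lambda_pos. pose proof base_ge2. pose proof lambda_base_gt1.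
  set (Dx := Wf (x + h) - Wf x). set (Dxb := Wf (x / B + h) - Wf (x / B)) in *.
  assert (Hself : lambda * (Wf (x + B * h) - Wf x) = Dxb - (phi (x / B + h) - phi (x / B))).
  { unfold Dxb. rewrite (W_functional_equation (x / B + h)), (W_functional_equation (x / B)).
    replace (B * (x / B + h)) with (x + B * h) by (field; lra).
    replace (B * (x / B)) with x by (field; lra). ring. }
  assert (Hdev := multiple_step_deviation Wf h K b HK x). fold B Dx in Hdev.
  replace (INR b * h) with (B * h) in Hdev by reflexivity.
  assert (Hphi := HL (x / B + h) (x / B)).
  replace (x / B + h - x / B) with h in Hphi by ring.
  assert (A1 : lambda * Rabs (Wf (x + B * h) - Wf x) <= Rabs Dxb + L * Rabs h).
  { rewrite <- (Rabs_right lambda) by lra. rewrite <- Rabs_mult, Hself.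
    eapply Rle_trans; [apply Rabs_triang|]. rewrite Rabs_Ropp. lra. }
  assert (A2 : B * Rabs Dx - K * B ^ 2 * Rabs h <= Rabs (Wf (x + B * h) - Wf x)).
  { pose proof (Rabs_triang_inv (B * Dx) (B * Dx - (Wf (x + B * h) - Wf x))) as T.
    replace (B * Dx - (B * Dx - (Wf (x + B * h) - Wf x))) with (Wf (x + B * h) - Wf x) in T by ring.
    rewrite Rabs_minus_sym, Rabs_mult, (Rabs_right B) in T by lra. lra. }
  assert (HC : scale_const K * (lambda * B - 1) = lambda * K * B ^ 2 + L)
    by (unfold scale_const; field; lra).
  assert (A3 : lambda * (B * Rabs Dx - K * B ^ 2 * Rabs h)
               <= lambda * Rabs (Wf (x + B * h) - Wf x)) by (apply Rmult_le_compat_l; lra).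
  assert (A4 : lambda * B * (scale_const K * Rabs h + e) <= lambda * B * Rabs Dx)
    by (apply Rmult_le_compat_l; [nra|exact He]).
  nra.
Qed.

(* Hence a K-Lipschitz step difference D_h W is bounded by scale_const K |h|,
   since W is bounded and lambda b > 1. *)
Lemma W_difference_bound (h K : R) :
  (forall x y, Rabs ((Wf (x + h) - Wf x) - (Wf (y + h) - Wf y)) <= K * Rabs (x - y)) ->
  forall x, Rabs (Wf (x + h) - Wf x) <= scale_const K * Rabs h.
Proof.
  intro HK. destruct W_bounded as [M HM].
  apply (escape_bound (fun x => Wf (x + h) - Wf x) (fun x => x / B) _ (2 * M) (lambda * B)).
  - exact lambda_base_gt1.
  - intro x. eapply Rle_trans; [apply Rabs_triang|]. rewrite Rabs_Ropp.
    pose proof (HM (x + h)). pose proof (HM x). lra.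
  - intros x e. apply W_difference_expansion, HK.
Qed.

Lemma W_lipschitz_of_irrational_period (t : R) :
  regulating_period 2 Wf t -> ~ is_rational t -> Lipschitz Wf.
Proof.
  intros Ht Hirr. set (u := fun x => Wf (x + t) - Wf x).
  assert (Hu : Zperiodic u).
  { intro x. unfold u. replace (x + 1 + t) with ((x + t) + 1) by ring.
    rewrite !W_periodic. reflexivity. }
  destruct (periodic_C2_derive_lipschitz u Hu Ht) as [A HA].
  assert (Hdu : forall x, is_derive u x (Derive u x))
    by (intro x; apply Derive_correct; exact (proj1 Ht 1%nat x ltac:(lia))).
  exists (scale_const (2 * A)). apply lipschitz_of_small_steps.
  - intros x eps Heps. destruct (W_uniformly_continuous eps Heps) as [eta [Heta Hc]].
    exists eta. split; [exact Heta|]. intro r. apply Hc.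
  - intros e He. destruct (archimed_cor1 e He) as [N [HN HN1]].
    destruct (dirichlet_coprime t N ltac:(lia)) as [q [p [Hq [Hg Hd]]]].
    assert (Hqt : Rabs (IZR q * t - IZR p) <= / IZR q).
    { left. eapply Rlt_le_trans; [exact Hd|]. apply Rinv_le_contravar.
      - apply IZR_lt; lia.
      - rewrite INR_IZR_INZ. apply IZR_le; lia. }
    exists (IZR q * t - IZR p). split; [|split].
    + intro E. apply Hirr. exact (rational_of_integer_relation t q p ltac:(lia) E).
    + lra.
    + apply W_difference_bound.
      exact (approximate_period_difference_lipschitz Wf (Derive u) A t q p
               W_periodic Hdu HA ltac:(lia) Hg Hqt).
Qed.

End Weierstrass.

Theorem mainTheorem6 (b : nat) (lambda : R) (phi : R -> R) :
  (2 <= b)%nat ->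
  / INR b < lambda < 1 ->
  Zperiodic phi ->
  Lipschitz phi ->
  ~ Lipschitz (W phi lambda (INR b)) ->
  forall t : R, regulating_period 2 (W phi lambda (INR b)) t -> is_rational t.
Proof.
  intros Hb Hlam Hper [L HL] HnotLip t Ht.
  apply NNPP. intro Hirr. apply HnotLip.
  exact (W_lipschitz_of_irrational_period b lambda phi L Hb Hlam Hper HL t Ht Hirr).
Qed.
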